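(* Let $X$ be a real locally uniformly convex Banach space and let $\varphi$ be a gauge function. Then for every $R>0$ and every $x_0\in X$ there exists a nondecreasing function $\psi=\psi(R,x_0):[0,\infty)\to[0,\infty)$ such that $\psi(0)=0$, $\psi(r)>0$ for all $r>0$, and $$\langle x^*-x_0^*,\,x-x_0\rangle\ \ge\ \psi(\|x-x_0\|)\,\|x-x_0\|$$ for all $x\in X$ with $\|x-x_0\|\le R$, all $x^*\in J_\varphi x$ and all $x_0^*\in J_\varphi x_0$.
   Context: A real Banach space $X$ is locally uniformly convex if for every $x_0\in X$ with $\|x_0\|=1$ and every $\varepsilon\in(0,2]$ there is $\delta=\delta(\varepsilon,x_0)>0$ such that for all $x\in X$ with $\|x\|=1$ and $\|x-x_0\|\ge\varepsilon$ one has $\|x+x_0\|\le 2(1-\delta)$. A gauge function is a strictly increasing continuous function $\varphi:[0,\infty)\to[0,\infty)$ with $\varphi(0)=0$ and $\varphi(r)\to\infty$ as $r\to\infty$. The duality mapping corresponding to $\varphi$ is the (possibly multivalued) map $J_\varphi:X\to 2^{X^*}$, $J_\varphi x=\{x^*\in X^*:\langle x^*,x\rangle=\varphi(\|x\|)\|x\|,\ \|x^*\|=\varphi(\|x\|)\}$. *)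

From HB Require Import structures.
From mathcomp Require Import all_boot all_order all_algebra.
From mathcomp Require Import all_classical all_reals all_analysis.
Set Implicit Arguments. Unset Strict Implicit. Unset Printing Implicit Defensive.
Import Order.TTheory GRing.Theory Num.Theory.
Import numFieldNormedType.Exports.
Local Open Scope classical_set_scope.
Local Open Scope ring_scope.

Definition locally_uniformly_convex {R : realType} (X : normedModType R) : Prop :=
  forall x0 : X, `|x0| = 1 ->
  forall eps : R, 0 < eps <= 2 ->
  exists delta : R, 0 < delta /\
    forall x : X, `|x| = 1 -> eps <= `|x - x0| -> `|x + x0| <= 2 * (1 - delta).

Definition gauge_function {R : realType} (phi : R -> R) : Prop :=
  [/\ (forall r s : R, 0 <= r -> r < s -> phi r < phi s),
      {within [set r : R | 0 <= r], continuous phi},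
      phi 0 = 0 &
      phi r @[r --> +oo] --> +oo].

Definition dual_elt {R : realType} (X : normedModType R) (f : X -> R) : Prop :=
  (forall (a : R) (x y : X), f (a *: x + y) = a * f x + f y) /\ continuous f.

Definition dual_norm {R : realType} (X : normedModType R) (f : X -> R) : R :=
  sup [set `|f y| | y in [set y : X | `|y| <= 1]].

Definition duality_map {R : realType} (X : normedModType R) (phi : R -> R)
    (x : X) (f : X -> R) : Prop :=
  [/\ dual_elt f, f x = phi `|x| * `|x| & dual_norm f = phi `|x|].

From HB Require Import structures.
From mathcomp Require Import all_boot all_order all_algebra.
From mathcomp Require Import all_classical all_reals all_analysis.
From mathcomp Require Import ring lra.
Set Implicit Arguments. Unset Strict Implicit. Unset Printing Implicit Defensive.
Import Order.TTheory GRing.Theory Num.Theory.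
Import numFieldNormedType.Exports.
Local Open Scope classical_set_scope.
Local Open Scope ring_scope.

(* Write Q(x) := <x^* - x0^*, x - x0> for x^* in J_phi x and x0^* in J_phi x0.
   Since |x^*| = phi|x| and |x0^*| = phi|x0|, the pairings x^*(x0), x0^*(x) and
   x^*(x + x0) are bounded by products of norms, which gives two lower bounds
   for Q (duality_monotone_bound, duality_convexity_bound):
     (phi|x| - phi|x0|) (|x| - |x0|)     and
     phi|x| (2|x| - |x+x0|) + phi|x0| (2|x0| - |x+x0|).
   Fix r > 0 and consider the x with |x - x0| >= r.  If |x| is far from |x0|,
   the first bound is bounded below by strict monotonicity of phi (gauge_gap);
   if |x| is close to |x0|, local uniform convexity at x0/|x0| forces |x+x0|
   to stay below 2|x| by a fixed margin (luc_sum_gap), so the second bound is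
   bounded below.  Hence Q >= m(r) > 0 on {|x - x0| >= r} (duality_gap).
   Finally psi(r) is the infimum of Q(x)/|x - x0| over r <= |x - x0| <= Rad,
   which is nondecreasing, positive for r > 0, and satisfies the inequality by
   construction. *)

Section ContinuousLinearFunctional.
Variables (R : realType) (X : normedModType R) (f : X -> R).
Hypothesis f_dual : dual_elt f.

Lemma dual_elt0 : f 0 = 0.
Proof.
case: f_dual => f_lin _; have := f_lin 1 0 0.
rewrite scale1r addr0 mul1r => f0_twice.
by apply: (addrI (f 0)); rewrite addr0.
Qed.

Lemma dual_eltZ a x : f (a *: x) = a * f x.
Proof. by case: f_dual => f_lin _; have := f_lin a x 0; rewrite !addr0 dual_elt0 addr0. Qed.

Lemma dual_eltD x y : f (x + y) = f x + f y.
Proof. by case: f_dual => f_lin _; have := f_lin 1 x y; rewrite scale1r mul1r. Qed.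

Lemma dual_eltB x y : f (x - y) = f x - f y.
Proof. by rewrite dual_eltD -scaleN1r dual_eltZ mulN1r. Qed.

(* Continuity at 0 makes f bounded on the unit ball. *)
Lemma dual_elt_bounded : exists M, forall y : X, `|y| <= 1 -> `|f y| <= M.
Proof.
case: f_dual => _ /(_ 0) /cvgr_dist_lt /(_ 1 ltr01).
rewrite dual_elt0 => /nbhs_norm0P [e e0 small].
exists (2 / e) => y y_le1.
have e2_gt0 : 0 < e / 2 by rewrite divr_gt0.
have : `|(e / 2) *: y| < e.
  rewrite normrZ gtr0_norm //; apply: (le_lt_trans (y := e / 2)).
    by rewrite ler_piMr // ltW.
  by rewrite ltr_pdivrMr // ltr_pMr // ltr1n.
move=> /small /=; rewrite sub0r normrN dual_eltZ normrM gtr0_norm //.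
by move=> lt1; rewrite ler_pdivlMr //; nra.
Qed.

Lemma dual_elt_le y : `|f y| <= dual_norm f * `|y|.
Proof.
have [M boundM] := dual_elt_bounded.
have in_ball z : `|z| <= 1 -> `|f z| <= dual_norm f.
  move=> z_le1; apply: ub_le_sup; last by exists z.
  by exists M => _ [w w_le1 <-]; apply: boundM.
have [->|y_nz] := eqVneq y 0; first by rewrite dual_elt0 !normr0 mulr0.
have ny_unit : `|y| \is a GRing.unit by rewrite unitfE normr_eq0.
have := in_ball (`|y|^-1 *: y).
rewrite normrZ normrV // normr_id mulVr // lexx => /(_ isT).
rewrite dual_eltZ normrM normrV // normr_id.
by rewrite ler_pdivrMl ?normr_gt0 // mulrC.
Qed.

End ContinuousLinearFunctional.

Section GaugeFunction.
Variables (R : realType) (phi : R -> R).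
Hypothesis gauge_phi : gauge_function phi.

Lemma gauge_lt r s : 0 <= r -> r < s -> phi r < phi s.
Proof. by case: gauge_phi => incr _ _ _; apply: incr. Qed.

Lemma gauge_le r s : 0 <= r -> r <= s -> phi r <= phi s.
Proof.
move=> r_ge0; rewrite le_eqVlt => /orP [/eqP ->//|lt_rs].
exact/ltW/gauge_lt.
Qed.

Lemma gauge0 : phi 0 = 0. Proof. by case: gauge_phi. Qed.

Lemma gauge_gt0 r : 0 < r -> 0 < phi r.
Proof. by move=> r_gt0; rewrite -gauge0 gauge_lt. Qed.

(* phi is monotone, so (phi s - phi a) and (s - a) have the same sign. *)
Lemma gauge_monotone_prod s a : 0 <= s -> 0 <= a -> 0 <= (phi s - phi a) * (s - a).
Proof.
move=> s_ge0 a_ge0; have [le_sa|le_as] := leP s a.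
  by have := gauge_le s_ge0 le_sa; nra.
by have := gauge_le a_ge0 (ltW le_as); nra.
Qed.

Lemma gauge_gap a eps : 0 < eps <= a ->
  exists2 c, 0 < c & forall s, 0 <= s -> eps <= `|s - a| ->
    c <= (phi s - phi a) * (s - a).
Proof.
move=> /andP [eps_gt0 eps_le].
have up : phi a < phi (a + eps) by apply: gauge_lt; lra.
have down : phi (a - eps) < phi a by apply: gauge_lt; lra.
set m := Num.min (phi (a + eps) - phi a) (phi a - phi (a - eps)).
have m_up : m <= phi (a + eps) - phi a by rewrite ge_min lexx.
have m_down : m <= phi a - phi (a - eps) by rewrite ge_min lexx orbT.
exists (eps * m); first by rewrite mulr_gt0 // lt_min !subr_gt0 up down.
move=> s s_ge0; rewrite ler_normr => /orP [far_up|far_down].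
- have : phi (a + eps) <= phi s by apply: gauge_le; lra.
  have : eps * m <= eps * (phi (a + eps) - phi a) by rewrite ler_wpM2l // ltW.
  nra.
- have : phi s <= phi (a - eps) by apply: gauge_le; lra.
  have : eps * m <= eps * (phi a - phi (a - eps)) by rewrite ler_wpM2l // ltW.
  nra.
Qed.

End GaugeFunction.

Section DualityMap.
Variables (R : realType) (X : normedModType R) (phi : R -> R).

Lemma duality_map_le (x : X) f y : duality_map phi x f -> f y <= phi `|x| * `|y|.
Proof.
by case=> f_dual _ <-; apply: le_trans (ler_norm _) (dual_elt_le f_dual _).
Qed.

Lemma duality_pairingE (x x0 : X) f f0 :
  duality_map phi x f -> duality_map phi x0 f0 ->
  f (x - x0) - f0 (x - x0) = phi `|x| * `|x| + phi `|x0| * `|x0| - f x0 - f0 x.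
Proof.
case=> f_dual fx _ [f0_dual f0x0 _].
by rewrite (dual_eltB f_dual) (dual_eltB f0_dual) fx f0x0; ring.
Qed.

Lemma duality_monotone_bound (x x0 : X) f f0 :
  duality_map phi x f -> duality_map phi x0 f0 ->
  (phi `|x| - phi `|x0|) * (`|x| - `|x0|) <= f (x - x0) - f0 (x - x0).
Proof.
move=> Jx Jx0; rewrite (duality_pairingE Jx Jx0).
have := duality_map_le x0 Jx; have := duality_map_le x Jx0; nra.
Qed.

Lemma duality_convexity_bound (x x0 : X) f f0 :
  duality_map phi x f -> duality_map phi x0 f0 ->
  phi `|x| * (2 * `|x| - `|x + x0|) + phi `|x0| * (2 * `|x0| - `|x + x0|)
    <= f (x - x0) - f0 (x - x0).
Proof.
move=> Jx Jx0; rewrite (duality_pairingE Jx Jx0).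
have := duality_map_le (x + x0) Jx; have := duality_map_le (x + x0) Jx0.
case: Jx => f_dual fx _; case: Jx0 => f0_dual f0x0 _.
rewrite (dual_eltD f_dual) (dual_eltD f0_dual) fx f0x0; nra.
Qed.

Lemma duality_monotone (x x0 : X) f f0 : gauge_function phi ->
  duality_map phi x f -> duality_map phi x0 f0 -> 0 <= f (x - x0) - f0 (x - x0).
Proof.
move=> gauge_phi Jx Jx0; apply: le_trans (duality_monotone_bound Jx Jx0).
exact: gauge_monotone_prod.
Qed.

End DualityMap.

Section Normalization.
Variables (R : realType) (X : normedModType R).

Definition normalize (x : X) : X := `|x|^-1 *: x.

Lemma normalizeK x : `|x| *: normalize x = x.
Proof.
have [->|x_nz] := eqVneq x 0; first by rewrite normr0 scale0r.
by rewrite scalerA mulfV ?normr_eq0 // scale1r.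
Qed.

Lemma norm_normalize x : x != 0 -> `|normalize x| = 1.
Proof.
move=> x_nz; have nx_unit : `|x| \is a GRing.unit by rewrite unitfE normr_eq0.
by rewrite normrZ normrV // normr_id mulVr.
Qed.

Lemma norm_normalize_le1 x : `|normalize x| <= 1.
Proof.
by have [->|/norm_normalize ->//] := eqVneq x 0; rewrite /normalize scaler0 normr0.
Qed.

Lemma normalize_distB x y :
  `|x - y| <= `|x| * `|normalize x - normalize y| + `| `|x| - `|y| |.
Proof.
have -> : x - y = `|x| *: (normalize x - normalize y) + ( `|x| - `|y| ) *: normalize y.
  by rewrite scalerBr scalerBl !normalizeK addrA subrK.
apply: le_trans (ler_normD _ _) _.
rewrite (normrZ `|x|) (normrZ (`|x| - `|y|)) normr_id lerD2l.
by rewrite ler_piMr ?normr_ge0 ?norm_normalize_le1.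
Qed.

Lemma normalize_distD x y :
  `|x + y| <= `|x| * `|normalize x + normalize y| + `| `|x| - `|y| |.
Proof.
have := normalize_distB x (- y).
by rewrite /normalize !normrN scalerN !opprK.
Qed.

(* Local uniform convexity at x0/|x0|, rescaled: a vector x with |x| close to
   |x0| but at distance >= r from x0 satisfies |x + x0| < 2|x| by a margin. *)
Lemma luc_sum_gap (x0 : X) r : locally_uniformly_convex X -> x0 != 0 -> 0 < r ->
  exists2 d, 0 < d & forall (x : X) eps, eps <= r / 2 ->
    `| `|x| - `|x0| | <= eps -> r <= `|x - x0| ->
    `|x + x0| <= 2 * `|x| * (1 - d) + eps.
Proof.
move=> luc x0_nz r_gt0; set a := `|x0|.
have a_gt0 : 0 < a by rewrite normr_gt0.
set e0 := (r / 2) / (a + r / 2).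
have e0_range : 0 < e0 <= 2.
  by rewrite divr_gt0 ?addr_gt0 ?divr_gt0 //= ler_pdivrMr ?addr_gt0 ?divr_gt0 //; lra.
have [d [d_gt0 luc_d]] := luc _ (norm_normalize x0_nz) e0 e0_range.
exists d => // x eps eps_le near far.
set t := `|normalize x - normalize x0|.
have t_ge0 : 0 <= t by apply: normr_ge0.
have x_near : `|x| <= a + r / 2 by move: near; rewrite ler_norml; lra.
have dir_far : r / 2 <= `|x| * t by have := normalize_distB x x0; rewrite -/a -/t; lra.
have x_nz : x != 0.
  by apply: contraTneq dir_far => ->; rewrite normr0 mul0r -ltNge divr_gt0.
have e0_le_t : e0 <= t by rewrite ler_pdivrMr ?addr_gt0 ?divr_gt0 //; nra.
have sum_le := luc_d _ (norm_normalize x_nz) e0_le_t.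
have := normalize_distD x x0; rewrite -/a; have := normr_ge0 x; nra.
Qed.

End Normalization.

Section UniformMonotonicity.
Variables (R : realType) (X : normedModType R) (phi : R -> R).
Hypotheses (luc : locally_uniformly_convex X) (gauge_phi : gauge_function phi).

Lemma duality_gap (x0 : X) r : 0 < r -> exists2 m, 0 < m &
  forall (x : X) f f0, r <= `|x - x0| -> duality_map phi x f ->
    duality_map phi x0 f0 -> m <= f (x - x0) - f0 (x - x0).
Proof.
move=> r_gt0; have [->|x0_nz] := eqVneq x0 0.
  exists (phi r * r) => [|x f f0]; first by rewrite mulr_gt0 ?gauge_gt0.
  move=> far Jx J0; apply: le_trans (duality_monotone_bound Jx J0).
  rewrite subr0 in far; rewrite normr0 (gauge0 gauge_phi) !subr0.
  apply: ler_pM; [exact/ltW/(gauge_gt0 gauge_phi) | exact: ltW | | exact: far].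
  by apply: (gauge_le gauge_phi) => //; exact: ltW.
set a := `|x0|; have a_gt0 : 0 < a by rewrite normr_gt0.
have [d d_gt0 sum_gap] := luc_sum_gap luc x0_nz r_gt0.
set eps := Num.min (r / 2) (Num.min (a / 2) (a * d / 6)).
have eps_r : eps <= r / 2 by rewrite ge_min lexx.
have eps_a : eps <= a / 2 by rewrite ge_min ge_min lexx orbT.
have eps_ad : eps <= a * d / 6 by rewrite ge_min ge_min lexx !orbT.
have eps_gt0 : 0 < eps by rewrite !lt_min !divr_gt0 ?mulr_gt0.
have eps_range : 0 < eps <= a by rewrite eps_gt0 /=; lra.
have [c c_gt0 norm_gap] := gauge_gap gauge_phi eps_range.
have phia_gt0 : 0 < phi a := gauge_gt0 gauge_phi a_gt0.
exists (Num.min c (phi a * (a * d / 2))).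
  by rewrite lt_min c_gt0 mulr_gt0 // !divr_gt0 ?mulr_gt0.
move=> x f f0 far Jx Jx0.
have [far_norm|near_norm] := leP eps `| `|x| - a |.
  apply: le_trans (duality_monotone_bound Jx Jx0).
  by apply: le_trans (norm_gap _ (normr_ge0 _) far_norm); rewrite ge_min lexx.
apply: le_trans (duality_convexity_bound Jx Jx0); rewrite -/a.
have sum_le := sum_gap x eps eps_r (ltW near_norm) far.
have x_near : a / 2 <= `|x| by move: (ltW near_norm); rewrite ler_norml; lra.
have margin : a * d <= 2 * `|x| * d by apply: ler_wpM2r; [exact: ltW | lra].
have own_term : 0 <= phi `|x| * (2 * `|x| - `|x + x0|).
  apply: mulr_ge0; last by nra.
  by apply/ltW/(gauge_gt0 gauge_phi); lra.
have : phi a * (a * d / 2) <= phi a * (2 * a - `|x + x0|).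
  by rewrite ler_wpM2l ?ltW //; move: (ltW near_norm); rewrite ler_norml; nra.
by rewrite ge_min; lra.
Qed.

End UniformMonotonicity.

Section Modulus.
Variables (R : realType) (X : normedModType R) (phi : R -> R) (x0 : X) (Rad : R).

(* The quotients Q(x)/|x - x0| over the annulus r <= |x - x0| <= Rad; the value
   1 is added so that the set is never empty. *)
Definition gap_quotients (r : R) : set R :=
  [set q | q = 1 \/ exists x f f0, [/\ r <= `|x - x0|, `|x - x0| <= Rad,
    duality_map phi x f, duality_map phi x0 f0 &
    q = (f (x - x0) - f0 (x - x0)) / `|x - x0|]].

Definition modulus (r : R) : R := if r <= 0 then 0 else inf (gap_quotients r).

Hypothesis gauge_phi : gauge_function phi.

Lemma gap_quotients_ge0 r q : gap_quotients r q -> 0 <= q.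
Proof.
case=> [->//|[x [f [f0 [_ _ Jx Jx0 ->]]]]].
exact/divr_ge0/normr_ge0/(duality_monotone gauge_phi Jx Jx0).
Qed.

Lemma gap_quotients_lbound r : has_lbound (gap_quotients r).
Proof. by exists 0 => q /gap_quotients_ge0. Qed.

Lemma gap_quotients_nonempty r : gap_quotients r !=set0.
Proof. by exists 1; left. Qed.

Lemma modulus_ge0 r : 0 <= modulus r.
Proof.
rewrite /modulus; case: ifP => // _.
by apply: lb_le_inf (gap_quotients_nonempty r) _ => q /gap_quotients_ge0.
Qed.

Lemma modulus0 : modulus 0 = 0.
Proof. by rewrite /modulus lexx. Qed.

(* Shrinking the annulus can only increase the infimum. *)
Lemma modulus_le r s : 0 <= r -> r <= s -> modulus r <= modulus s.
Proof.
move=> r_ge0 le_rs; rewrite /modulus; case: ifPn => [_|r_gt0]; first exact: modulus_ge0.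
have -> : (s <= 0) = false by apply/negbTE; move: r_gt0; rewrite -!ltNge; lra.
apply: lb_le_inf (gap_quotients_nonempty s) _ => q Sq.
apply: ge_inf; first exact: gap_quotients_lbound.
case: Sq => [->|[x [f [f0 [far in_ball Jx Jx0 ->]]]]]; first by left.
by right; exists x, f, f0; split => //; apply: le_trans far.
Qed.

(* Positivity comes from the uniform lower bound of duality_gap, divided by the
   largest possible distance Rad. *)
Lemma modulus_gt0 r : locally_uniformly_convex X -> 0 < Rad -> 0 < r ->
  0 < modulus r.
Proof.
move=> luc Rad_gt0 r_gt0; rewrite /modulus leNgt r_gt0 /=.
have [m m_gt0 gap] := duality_gap luc gauge_phi x0 r_gt0.
apply: (@lt_le_trans _ _ (Num.min 1 (m / Rad))); first by rewrite lt_min ltr01 divr_gt0.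
apply: lb_le_inf (gap_quotients_nonempty r) _ => q.
case=> [->|[x [f [f0 [far in_ball Jx Jx0 ->]]]]]; first by rewrite ge_min lexx.
have dist_gt0 : 0 < `|x - x0| by lra.
have Q_ge0 := duality_monotone gauge_phi Jx Jx0.
have Q_ge := gap x f f0 far Jx Jx0.
rewrite ge_min; apply/orP; right.
by rewrite ler_pdivrMr // mulrAC ler_pdivlMr //; nra.
Qed.

Lemma modulus_bound (x : X) f f0 : `|x - x0| <= Rad ->
  duality_map phi x f -> duality_map phi x0 f0 ->
  modulus `|x - x0| * `|x - x0| <= f (x - x0) - f0 (x - x0).
Proof.
move=> in_ball Jx Jx0; have [dist0|dist_nz] := eqVneq `|x - x0| 0.
  by rewrite dist0 mulr0; exact: duality_monotone gauge_phi Jx Jx0.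
have dist_gt0 : 0 < `|x - x0| by rewrite lt_def dist_nz normr_ge0.
rewrite /modulus (leNgt _ 0) dist_gt0 /= -ler_pdivlMr //.
apply: ge_inf; first exact: gap_quotients_lbound.
by right; exists x, f, f0; split.
Qed.

End Modulus.

Theorem theorem2 (R : realType) (X : completeNormedModType R) (phi : R -> R) :
  locally_uniformly_convex X -> gauge_function phi ->
  forall (Rad : R) (x0 : X), 0 < Rad ->
  exists psi : R -> R,
    [/\ (forall r s : R, 0 <= r -> r <= s -> psi r <= psi s),
        (forall r : R, 0 <= r -> 0 <= psi r),
        psi 0 = 0,
        (forall r : R, 0 < r -> 0 < psi r) &
        (forall (x : X) (f f0 : X -> R), `|x - x0| <= Rad ->
           duality_map phi x f -> duality_map phi x0 f0 ->
           psi `|x - x0| * `|x - x0| <= f (x - x0) - f0 (x - x0))].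
Proof.
move=> luc gauge_phi Rad x0 Rad_gt0.
exists (modulus phi x0 Rad); split.
- exact: modulus_le.
- by move=> r _; apply: modulus_ge0.
- exact: modulus0.
- by move=> r; apply: modulus_gt0.
- by move=> x f f0; apply: modulus_bound.
Qed.
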